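(* Let $a>0$, $\beta>0$, let $\lambda$ be feasible, let $0<\xi<a$, let $\rho\in\mathcal{P}$, and suppose $d_0\ge\tau(\beta)a$. Then $\lim_{\delta\to0^+}T_4=0$, where \[ T_4=9C_5\,\delta^{-1/2}(2\delta+\lambda\delta^{\beta})^{-3/2}(\lambda^2\delta^{2\beta}+4)\int_{k_0(\delta)}^{\infty}\mathrm{e}^{-2k(d_0-\frac32a)}\mathrm{e}^{-4ka}\left(\frac{\mathrm{e}^{2k\xi}-1}{k}\right)\mathrm{d}k,\qquad C_5=\frac{(d_1-d_0)\|\rho\|^2_{L^2(\mathcal{M})}}{9\pi}. \]
   Context: For $0<\delta<1$ and constants $\beta>0$, $\lambda\in\mathbb{R}$, put $\mu=\delta+\lambda\delta^{\beta}$. The constant $\lambda$ is feasible if $\lambda>0$ when $0<\beta<1$, $\lambda\ge-1$ when $\beta=1$, $\lambda\ne0$ when $\beta>1$; $\delta_\mu\in(0,1)$ is a number with $\mu\ge0$ for $0<\delta\le\delta_\mu$. $k_0(\delta)=\frac{1}{2a}\ln\left(\frac{1}{2\delta^2+\lambda\delta^{\beta+1}}\right)$, and $\delta$ ranges over $0<\delta\le\delta_0$, where $0<\delta_0\le\delta_\mu$ is such that $k_0(\delta)>0$ for $0<\delta\le\delta_0$. $\tau(\beta)=\frac{\beta+2}{\beta+1}$ for $0<\beta<1$ and $\tau(\beta)=\frac32$ for $\beta\ge1$. Let $\mathcal{M}=\{(x,y):x>a\}$; $\mathcal{P}$ is the set of real-valued $\rho\in L^2(\mathcal{M})\cap L^\infty(\mathcal{M})$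 with compact support in $\mathcal{M}$, $0<|\operatorname{supp}\rho|<\infty$, and $\int\!\!\int\rho=0$; $d_0=\min\{x:(x,y)\in\operatorname{supp}\rho\}$, $d_1=\max\{x:(x,y)\in\operatorname{supp}\rho\}$. *)

From HB Require Import structures.
From mathcomp Require Import all_boot all_order all_algebra.
From mathcomp Require Import all_classical all_reals all_analysis.
Set Implicit Arguments. Unset Strict Implicit. Unset Printing Implicit Defensive.
Import Order.TTheory GRing.Theory Num.Theory.
Import numFieldNormedType.Exports.
Local Open Scope classical_set_scope.
Local Open Scope ring_scope.

Section defs.
Variable R : realType.

Definition leb2 := (@lebesgue_measure R \x @lebesgue_measure R)%E.

Definition feasible (beta lambda : R) : Prop :=
  (0 < beta < 1 -> 0 < lambda) /\
  (beta = 1 -> -1 <= lambda) /\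
  (1 < beta -> lambda <> 0).

Definition tau (beta : R) : R :=
  if beta < 1 then (beta + 2) / (beta + 1) else 3 / 2.

Definition halfM (a : R) : set (R * R) := [set p | a < p.1].

Definition supp (rho : R * R -> R) : set (R * R) :=
  closure [set p | rho p != 0].

Definition classP (a : R) (rho : R * R -> R) : Prop :=
  [/\ measurable_fun (halfM a) rho,
      (\int[leb2]_(p in halfM a) ((rho p) ^+ 2)%:E < +oo)%E,
      (exists M : R, leb2 [set p | halfM a p /\ M < `|rho p|] = 0%E),
      (compact (supp rho) /\ supp rho `<=` halfM a) &
      [/\ (0 < leb2 (supp rho))%E, (leb2 (supp rho) < +oo)%E &
       (\int[leb2]_(p in halfM a) (rho p)%:E = 0)%E]].

Definition is_d0 (rho : R * R -> R) (d0 : R) : Prop :=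
  (exists y, supp rho (d0, y)) /\ forall p, supp rho p -> d0 <= p.1.
Definition is_d1 (rho : R * R -> R) (d1 : R) : Prop :=
  (exists y, supp rho (d1, y)) /\ forall p, supp rho p -> p.1 <= d1.

Definition L2sq (a : R) (rho : R * R -> R) : R :=
  fine (\int[leb2]_(p in halfM a) ((rho p) ^+ 2)%:E)%E.

Definition C5 (a d0 d1 : R) (rho : R * R -> R) : R :=
  (d1 - d0) * L2sq a rho / (9 * pi).

Definition k0 (a beta lambda delta : R) : R :=
  (2 * a)^-1 * ln ((2 * delta ^+ 2 + lambda * delta `^ (beta + 1))^-1).

Definition T4 (a beta lambda xi d0 d1 : R) (rho : R * R -> R) (delta : R) : \bar R :=
  ((9 * C5 a d0 d1 rho * delta `^ (- (1/2)) *
     (2 * delta + lambda * delta `^ beta) `^ (- (3/2)) *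
     (lambda ^+ 2 * delta `^ (2 * beta) + 4))%:E *
   \int[@lebesgue_measure R]_(k in `[k0 a beta lambda delta, +oo[)
      (expR (- (2 * k * (d0 - 3/2 * a))) * expR (- (4 * k * a)) *
       ((expR (2 * k * xi) - 1) / k))%:E)%E.
End defs.

From HB Require Import structures.
From mathcomp Require Import all_boot all_order all_algebra.
From mathcomp Require Import all_classical all_reals all_analysis.
From mathcomp Require Import measurable_realfun ring lra.
Import Order.TTheory GRing.Theory Num.Theory.
Import numFieldNormedType.Exports.
Local Open Scope classical_set_scope.
Local Open Scope ring_scope.

(* Bound the integrand by [2 xi e^{-(2 d0 - xi) k} e^{-(a - xi) k}]: on [[k0, oo[] the first
   exponential is at most its value at [k0], and the second integrates to at most
   [1/(a - xi)].  Since [k0] is [-ln (d u)/(2a)] with [u = 2d + lambda d^beta], this gives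
   [T4 <= C d^{-1/2} u^{-3/2} (d u)^s] with [s = (2 d0 - xi)/(2a)].  Feasibility of lambda
   makes [u] of exact order [d^g] for some [g > 0] ([g = beta] if [beta < 1], [g = 1] otherwise),
   so [T4 = O(d^{s - 1/2 + (s - 3/2) g})], and [d0 >= tau(beta) a] is what makes this
   exponent positive. *)

Section T4_estimates.
Context {R : realType}.

Lemma powRE_gt0 (x y : R) : 0 < x -> x `^ y = expR (y * ln x).
Proof. by move=> x0; rewrite /powR gt_eqF. Qed.

Lemma expR_sub1_le (x : R) : expR x - 1 <= x * expR x.
Proof.
have e0 := expR_gt0 x.
have : (1 - x) * expR x <= (expR x)^-1 * expR x.
  by rewrite ler_pM2r // -expRN; exact: expR_ge1Dx.
rewrite mulVf ?gt_eqF // mulrBl mul1r; lra.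
Qed.

Definition tail_integrand (a xi d0 k : R) : R :=
  expR (- (2 * k * (d0 - 3/2 * a))) * expR (- (4 * k * a)) *
  ((expR (2 * k * xi) - 1) / k).

Lemma tail_integrand_ge0 (a xi d0 k : R) :
  0 <= xi -> 0 <= k -> 0 <= tail_integrand a xi d0 k.
Proof.
move=> xi0 k0; rewrite /tail_integrand !mulr_ge0 ?expR_ge0 ?invr_ge0 //.
by rewrite subr_ge0 -expR0 ler_expR !mulr_ge0.
Qed.

(* [(e^{2k xi} - 1)/k <= 2 xi e^{2k xi}] and [2(d0 - 3a/2) + 4a - 2 xi = (2 d0 - xi) + (a - xi)]. *)
Lemma tail_integrand_le (a xi d0 k : R) : 0 < k ->
  tail_integrand a xi d0 k <=
  2 * xi * expR (- (2 * d0 - xi) * k) * expR (- (a - xi) * k).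
Proof.
move=> k0; have quotient_le : (expR (2 * k * xi) - 1) / k <= 2 * xi * expR (2 * k * xi).
  rewrite ler_pdivrMr //.
  have -> : 2 * xi * expR (2 * k * xi) * k = 2 * k * xi * expR (2 * k * xi) by ring.
  exact: expR_sub1_le.
apply: le_trans (ler_wpM2l _ quotient_le) _; first by rewrite mulr_ge0 ?expR_ge0.
rewrite le_eqVlt; apply/orP; left; apply/eqP.
rewrite mulrCA -!expRD -(mulrA _ (expR _)) -expRD.
by congr (_ * expR _); field.
Qed.

Lemma measurable_tail_integrand (a xi d0 : R) :
  measurable_fun (`]0, +oo[%classic : set R) (tail_integrand a xi d0).
Proof.
apply: measurable_funM; [apply: measurable_funM|apply: measurable_funM].
1,2: by apply: measurableT_comp => //; apply: measurableT_comp => //; exact: measurable_funM.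
- apply: measurable_funB => //; apply: measurableT_comp => //; exact: measurable_funM.
- apply: open_continuous_measurable_fun; first exact: interval_open.
  move=> x; rewrite inE /= in_itv /= andbT => x0.
  by apply: inv_continuous; rewrite gt_eqF.
Qed.

Lemma tail_integral_ge0 (a xi d0 k0 : R) : 0 <= xi -> 0 <= k0 ->
  (0 <= \int[@lebesgue_measure R]_(k in `[k0, +oo[) (tail_integrand a xi d0 k)%:E)%E.
Proof.
move=> xi0 k00; apply: integral_ge0 => k; rewrite /= in_itv /= andbT => k0k.
by rewrite lee_fin tail_integrand_ge0 // (le_trans k00).
Qed.

(* Dominate by a multiple of the density of the exponential law of rate [a - xi]. *)
Lemma tail_integral_le (a xi d0 k0 : R) : 0 < xi < a -> xi <= 2 * d0 -> 0 < k0 ->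
  (\int[@lebesgue_measure R]_(k in `[k0, +oo[) (tail_integrand a xi d0 k)%:E <=
   (2 * xi / (a - xi) * expR (- (2 * d0 - xi) * k0))%:E)%E.
Proof.
move=> /andP[xi0 xia] xid0 k00.
have axi : 0 < a - xi by rewrite subr_gt0.
have k0_pos k : k \in `[k0, +oo[ -> 0 < k.
  by rewrite in_itv /= andbT; apply: lt_le_trans.
set K := 2 * xi / (a - xi) * expR (- (2 * d0 - xi) * k0).
have K0 : 0 <= K by rewrite !mulr_ge0 ?expR_ge0 ?invr_ge0 ?ltW.
have mK : measurable_fun setT (fun k => (K * exponential_pdf (a - xi) k)%:E).
  by apply/measurable_EFinP; apply: measurable_funM => //; exact: measurable_exponential_pdf.
apply: (@le_trans _ _ (\int[@lebesgue_measure R]_k (K * exponential_pdf (a - xi) k)%:E)%E).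
  have pdf_ge0 k : (0 <= (K * exponential_pdf (a - xi) k)%:E)%E.
    by rewrite lee_fin mulr_ge0 // exponential_pdf_ge0 // ltW.
  have := ge0_subset_integral (@lebesgue_measure R) (measurable_itv `[k0, +oo[)
    measurableT mK (fun k _ => pdf_ge0 k) (@subsetT _ _).
  apply: le_trans.
  apply: ge0_le_integral => //.
  - by move=> k /k0_pos k0k; rewrite lee_fin tail_integrand_ge0 ?ltW.
  - apply/measurable_EFinP; apply: measurable_funS (measurable_tail_integrand _ _ _) => //.
    by move=> k /= /k0_pos k0k; rewrite in_itv /= k0k.
  - exact: measurable_funS mK.
  move=> k kk0; have k0k := k0_pos _ kk0; move: kk0; rewrite /= in_itv /= andbT => kk0.
  rewrite lee_fin exponential_pdfE ?(ltW k0k) //.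
  apply: le_trans (@tail_integrand_le a xi d0 k k0k) _.
  have -> : K * ((a - xi) * expR (- (a - xi) * k)) =
      2 * xi * expR (- (2 * d0 - xi) * k0) * expR (- (a - xi) * k).
    by rewrite /K; field; rewrite gt_eqF.
  rewrite ler_wpM2r ?expR_ge0 // ler_wpM2l ?mulr_ge0 ?(ltW xi0) // ler_expR.
  by rewrite !mulNr lerN2 ler_wpM2l // subr_ge0.
under eq_integral do rewrite EFinM.
rewrite ge0_integralZl_EFin //.
- by rewrite integral_exponential_pdf // mule1.
- by move=> k _; rewrite lee_fin exponential_pdf_ge0 // ltW.
- by apply/measurable_EFinP; exact: measurable_exponential_pdf.
Qed.

(* [u d] is of exact order [d ^ g] as [d -> 0+]: [ln (u d) = g ln d + O(1)]. *)
Definition exact_order0 (u : R -> R) (g : R) : Prop :=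
  exists L : R, \forall d \near 0^'+, 0 < u d /\ `|ln (u d) - g * ln d| <= L.

Lemma near0_scaled_powR_lt (c q e : R) : 0 < q -> 0 < e ->
  \forall d \near 0^'+, `|c * d `^ q| < e.
Proof.
move=> q0; apply: cvgr0_norm_lt.
have := cvgMl_tmp (a := c) (powR_cvg0 q0); rewrite mulr0; apply.
Qed.

Lemma norm_ln_le (A B w : R) : 0 < A -> A <= w <= B -> `|ln w| <= `|ln A| + `|ln B|.
Proof.
move=> A0 /andP[Aw wB].
have lnAw : ln A <= ln w by rewrite ler_ln // posrE (lt_le_trans A0).
have lnwB : ln w <= ln B by rewrite ler_ln // posrE (lt_le_trans A0) // (le_trans Aw).
have := ler_norm (ln B); have := ler_norm (- ln A); rewrite normrN.
have := normr_ge0 (ln A); have := normr_ge0 (ln B).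
rewrite ler_norml; lra.
Qed.

Lemma exact_order0_factor (u w : R -> R) (g A B : R) : 0 < A ->
  (\forall d \near 0^'+, u d = d `^ g * w d /\ A <= w d <= B) -> exact_order0 u g.
Proof.
move=> A0 uE; exists (`|ln A| + `|ln B|); near=> d.
have d0 : 0 < d by near: d; exact: nbhs_right_gt.
have [-> wAB] : u d = d `^ g * w d /\ A <= w d <= B by near: d; exact: uE.
have w0 : 0 < w d by case/andP: wAB => + _; exact: lt_le_trans.
split; first by rewrite mulr_gt0 ?powR_gt0.
by rewrite lnM ?posrE ?powR_gt0 // ln_powR addrC addKr; exact: norm_ln_le.
Unshelve. all: end_near.
Qed.

Lemma powR_le_exact_order (ud d g t L : R) : 0 < ud -> 0 < d ->
  `|ln ud - g * ln d| <= L -> ud `^ t <= expR (`|t| * L) * d `^ (g * t).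
Proof.
move=> ud0 d0 close; rewrite !powRE_gt0 // -expRD ler_expR.
have -> : t * ln ud = t * (ln ud - g * ln d) + g * t * ln d by ring.
rewrite lerD2r; apply: le_trans (ler_norm _) _.
by rewrite normrM ler_wpM2l.
Qed.

Lemma exact_order0_sublinear (beta lambda : R) : 0 < beta < 1 -> 0 < lambda ->
  exact_order0 (fun d => 2 * d + lambda * d `^ beta) beta.
Proof.
move=> /andP[b0 b1] l0; apply: (@exact_order0_factor _
  (fun d => lambda + 2 * d `^ (1 - beta)) _ lambda (lambda + 1) l0).
have b10 : 0 < 1 - beta by rewrite subr_gt0.
near=> d.
have d0 : 0 < d by near: d; exact: nbhs_right_gt.
have small : `|2 * d `^ (1 - beta)| < 1 by near: d; exact: near0_scaled_powR_lt.
split.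
  rewrite mulrDr mulrCA -powRD; last by rewrite (gt_eqF d0) implybT.
  by rewrite addrCA subrr addr0 powRr1 ?(ltW d0) // addrC mulrC.
have := powR_ge0 d (1 - beta); move: small; rewrite ltr_norml; lra.
Unshelve. all: end_near.
Qed.

Lemma exact_order0_linear (lambda : R) : -2 < lambda ->
  exact_order0 (fun d => 2 * d + lambda * d `^ 1) 1.
Proof.
move=> l2; have l0 : 0 < 2 + lambda by lra.
apply: (@exact_order0_factor _ (fun=> 2 + lambda) _ _ (2 + lambda) l0).
near=> d; have d0 : 0 < d by near: d; exact: nbhs_right_gt.
by rewrite powRr1 ?(ltW d0) // lexx; split => //; ring.
Unshelve. all: end_near.
Qed.

Lemma exact_order0_superlinear (beta lambda : R) : 1 < beta ->
  exact_order0 (fun d => 2 * d + lambda * d `^ beta) 1.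
Proof.
move=> b1; have b10 : 0 < beta - 1 by rewrite subr_gt0.
apply: (@exact_order0_factor _ (fun d => 2 + lambda * d `^ (beta - 1)) _ 1 3 ltr01).
near=> d.
have d0 : 0 < d by near: d; exact: nbhs_right_gt.
have small : `|lambda * d `^ (beta - 1)| < 1 by near: d; exact: near0_scaled_powR_lt.
split.
  by rewrite powRr1 ?(ltW d0) // mulrDr mulrCA mulr_powRB1 ?(ltW d0) ?(lt_trans ltr01 b1) // mulrC.
by move: small; rewrite ltr_norml; lra.
Unshelve. all: end_near.
Qed.

Lemma feasible_exact_order {beta lambda : R} :
  0 < beta -> feasible beta lambda ->
  exists2 g : R, 0 < g /\ 1 + 3 * g <= (2 * tau beta - 1) * (1 + g) &
    exact_order0 (fun d => 2 * d + lambda * d `^ beta) g.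
Proof.
move=> b0 [sub [lin sup]]; rewrite /tau.
have [b1|b1] := ltP beta 1.
  have b01 : 0 < beta < 1 by rewrite b0 b1.
  exists beta; last exact: exact_order0_sublinear b01 (sub b01).
  split => //.
  have -> : (2 * ((beta + 2) / (beta + 1)) - 1) * (1 + beta) = beta + 3.
    by field; rewrite gt_eqF // ltr_wpDl // ltW.
  lra.
exists 1; first by split; lra.
have [b_eq1|b_neq1] := eqVneq beta 1.
  by rewrite b_eq1; apply: exact_order0_linear; have := lin b_eq1; lra.
by apply: exact_order0_superlinear; rewrite lt_neqAle eq_sym b_neq1 b1.
Qed.

Lemma C5_ge0 (a d0 d1 : R) (rho : R * R -> R) :
  is_d0 rho d0 -> is_d1 rho d1 -> 0 <= C5 a d0 d1 rho.
Proof.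
move=> [[y supp_d0] _] [_ le_d1].
rewrite /C5 divr_ge0 ?mulr_ge0 ?pi_ge0 // ?subr_ge0 ?(le_d1 _ supp_d0) //.
by apply: fine_ge0; apply: integral_ge0 => p _; rewrite lee_fin sqr_ge0.
Qed.

Lemma near0_k0_arg_lt1 (beta lambda : R) : 0 < beta ->
  \forall d \near 0^'+, 2 * d ^+ 2 + lambda * d `^ (beta + 1) < 1.
Proof.
move=> b0; have b1 : 0 < beta + 1 by rewrite addr_gt0.
near=> d.
have d0 : 0 < d by near: d; exact: nbhs_right_gt.
have small_sq : `|2 * d `^ 2| < 2^-1 by near: d; exact: near0_scaled_powR_lt.
have small_pow : `|lambda * d `^ (beta + 1)| < 2^-1 by near: d; exact: near0_scaled_powR_lt.
rewrite -(powR_mulrn 2 (ltW d0)).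
move: small_sq small_pow; rewrite !ltr_norml; lra.
Unshelve. all: end_near.
Qed.

Section k0.
Context {a beta lambda d : R}.

Lemma k0_arg_factor : 0 < d ->
  2 * d ^+ 2 + lambda * d `^ (beta + 1) = d * (2 * d + lambda * d `^ beta).
Proof.
move=> d0; rewrite powRD ?(gt_eqF d0) ?implybT // powRr1 ?(ltW d0) //; ring.
Qed.

Hypotheses (a0 : 0 < a) (arg_gt0 : 0 < 2 * d ^+ 2 + lambda * d `^ (beta + 1)).

Lemma k0_gt0 : 2 * d ^+ 2 + lambda * d `^ (beta + 1) < 1 -> 0 < k0 a beta lambda d.
Proof. by move=> arg_lt1; rewrite /k0 mulr_gt0 ?invr_gt0 ?ln_gt0 ?invf_gt1 ?mulr_gt0. Qed.

Lemma expR_k0 c :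
  expR (- c * k0 a beta lambda d) = (2 * d ^+ 2 + lambda * d `^ (beta + 1)) `^ (c / (2 * a)).
Proof.
rewrite /k0 lnV ?posrE // (powRE_gt0 _ _ arg_gt0); congr expR.
by field; rewrite gt_eqF.
Qed.

End k0.

(* [d ^ (-1/2) u ^ (-3/2) (d u) ^ s = d ^ (s - 1/2) u ^ (s - 3/2)], and [u ^ (s - 3/2)] is
   comparable to [d ^ (g (s - 3/2))]. *)
Lemma T4_coef_le (c K q s g L d ud : R) :
  0 <= c -> 0 <= K -> 0 <= q <= 1 -> 0 < d -> 0 < ud -> `|ln ud - g * ln d| <= L ->
  c * d `^ (- (1/2)) * ud `^ (- (3/2)) * (q + 4) * (K * (d * ud) `^ s) <=
  c * 5 * K * expR (`|s - 3/2| * L) * d `^ (s - 1/2 + (s - 3/2) * g).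
Proof.
move=> c0 K0 /andP[q0 q1] d0 ud0 close.
have powR_split (x y z : R) : 0 < x -> x `^ y * x `^ z = x `^ (y + z).
  by move=> x0; rewrite powRD // (gt_eqF x0) implybT.
have ud_le := @powR_le_exact_order ud d g (s - 3/2) L ud0 d0 close.
rewrite powRM ?(ltW d0) ?(ltW ud0) //.
have -> : c * d `^ (- (1/2)) * ud `^ (- (3/2)) * (q + 4) * (K * (d `^ s * ud `^ s)) =
    (c * K) * (q + 4) * (d `^ (- (1/2)) * d `^ s) * (ud `^ (- (3/2)) * ud `^ s) by ring.
have -> : c * 5 * K * expR (`|s - 3/2| * L) * d `^ (s - 1/2 + (s - 3/2) * g) =
    (c * K) * 5 * d `^ (s - 1/2) * (expR (`|s - 3/2| * L) * d `^ (g * (s - 3/2))).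
  by rewrite -mulrA mulrCA -powR_split // (mulrC g); ring.
rewrite !powR_split // !(addrC (- _)).
apply: ler_pM => //; rewrite ?mulr_ge0 ?powR_ge0 ?addr_ge0 //.
by rewrite ler_wpM2r ?powR_ge0 // ler_wpM2l ?mulr_ge0 // lerD2r.
Qed.

Lemma T4_le_powR (a beta lambda xi d0 d1 : R) (rho : R * R -> R) (g L s d : R) :
  0 < a -> 0 < xi < a -> 0 <= C5 a d0 d1 rho -> 0 < d ->
  0 < 2 * d + lambda * d `^ beta -> `|ln (2 * d + lambda * d `^ beta) - g * ln d| <= L ->
  lambda ^+ 2 * d `^ (2 * beta) <= 1 -> 2 * d ^+ 2 + lambda * d `^ (beta + 1) < 1 ->
  xi <= 2 * d0 -> s = (2 * d0 - xi) / (2 * a) ->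
  (0 <= T4 a beta lambda xi d0 d1 rho d <=
   (9 * C5 a d0 d1 rho * 5 * (2 * xi / (a - xi)) * expR (`|s - 3/2| * L) *
    d `^ (s - 1/2 + (s - 3/2) * g))%:E)%E.
Proof.
move=> a0 xi_bounds C50 d_gt0 u0 close q_le1 arg_lt1 xi_le sE.
have /andP[xi0 xia] := xi_bounds.
have arg_gt0 : 0 < 2 * d ^+ 2 + lambda * d `^ (beta + 1).
  by rewrite k0_arg_factor // mulr_gt0.
have k0_pos := k0_gt0 a0 arg_gt0 arg_lt1.
have c0 : 0 <= 9 * C5 a d0 d1 rho * d `^ (- (1/2)) *
    (2 * d + lambda * d `^ beta) `^ (- (3/2)) * (lambda ^+ 2 * d `^ (2 * beta) + 4).
  apply: mulr_ge0; last by rewrite addr_ge0 // mulr_ge0 ?sqr_ge0 ?powR_ge0.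
  by rewrite 2?mulr_ge0 ?powR_ge0 // mulr_ge0.
have := @tail_integral_le a xi d0 _ xi_bounds xi_le k0_pos.
rewrite expR_k0 // k0_arg_factor // => int_le.
rewrite mule_ge0 ?lee_fin ?tail_integral_ge0 ?(ltW k0_pos) ?(ltW xi0) //=.
apply: le_trans (lee_wpmul2l _ int_le) _; first by rewrite lee_fin.
rewrite -EFinM lee_fin -sE; apply: T4_coef_le => //.
- exact: mulr_ge0.
- by rewrite divr_ge0 ?mulr_ge0 ?subr_ge0 ?(ltW xi0) ?(ltW xia).
- by rewrite q_le1 andbT mulr_ge0 ?sqr_ge0 ?powR_ge0.
Qed.

End T4_estimates.

Theorem lemma5p5 (R : realType) (a beta lambda xi : R) (rho : R * R -> R) (d0 d1 : R) :
  0 < a -> 0 < beta -> feasible beta lambda -> 0 < xi < a ->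
  classP a rho -> is_d0 rho d0 -> is_d1 rho d1 ->
  tau beta * a <= d0 ->
  T4 a beta lambda xi d0 d1 rho delta @[delta --> 0^'+] --> 0%E.
Proof.
move=> a0 b0 feas xi_bounds _ hd0 hd1 tau_d0.
have /andP[xi0 xia] := xi_bounds.
have tau_ge : 3/2 <= tau beta.
  by rewrite /tau; case: ifPn => [b1|_]; rewrite ?ler_pdivlMr; lra.
have xi_le : xi <= 2 * d0 by nra.
have [g [g0 g_tau] [L close]] := feasible_exact_order b0 feas.
set s := (2 * d0 - xi) / (2 * a).
have s_gt : tau beta - 1/2 < s by rewrite /s ltr_pdivlMr ?mulr_gt0 //; nra.
have p0 : 0 < s - 1/2 + (s - 3/2) * g by nra.
have b2 : 0 < 2 * beta by rewrite mulr_gt0.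
set M := 9 * C5 a d0 d1 rho * 5 * (2 * xi / (a - xi)) * expR (`|s - 3/2| * L).
apply: (@squeeze_cvge _ _ _ _ (fun=> 0%E) _ (fun d => (M * d `^ (s - 1/2 + (s - 3/2) * g))%:E)).
- near=> d; apply: T4_le_powR => //.
  + exact: C5_ge0.
  + by near: d; apply: filterS _ close => ? [].
  + by near: d; apply: filterS _ close => ? [].
  + near: d; apply: filterS _ (near0_scaled_powR_lt (lambda ^+ 2) _ 1 b2 ltr01) => d.
    by move/(le_lt_trans (ler_norm _))/ltW.
  + by near: d; exact: near0_k0_arg_lt1.
- exact: cvg_cst.
- apply: cvg_EFin; first by near=> d.
  by have := cvgMl_tmp (a := M) (powR_cvg0 p0); rewrite mulr0; apply.
Unshelve. all: end_near.
Qed.
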